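(* Let $\Phi,\Psi$ be complementary $N$-functions both satisfying the $\Delta_2^0$-condition and let $\varphi=\{\varphi_k\}_{k=0}^\infty$, $\psi=\{\psi_k\}_{k=0}^\infty$ be weight sequences in $\mathcal{W}$. There exists a constant $C>0$ depending only on $\Phi,\Psi,\varphi,\psi$ such that for every $a\in W\cap F\ell_{\varphi,\psi}^{\Phi,\Psi}$, every $n\in\mathbb{N}$ and every $j\in\{0,\dots,n\}$, \[ \|Q_nT(a)\Delta_j\|_{\mathcal{B}(\ell^\Psi(\mathbb{Z}_+))}\le C\,\frac{\|a-a^{(n-j)}\|_{F\ell_{\varphi,\psi}^{\Phi,\Psi}}}{\psi_{n-j+1}}, \qquad \|\Delta_jT(a)Q_n\|_{\mathcal{B}(\ell^\Psi(\mathbb{Z}_+))}\le C\,\frac{\|a-a^{(n-j)}\|_{F\ell_{\varphi,\psi}^{\Phi,\Psi}}}{\varphi_{n-j+1}}. \]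
   Context: $\mathbb{T}$ is the unit circle; $f_k$ denote Fourier coefficients of $f\in L^1(\mathbb{T})$. $W$ is the Wiener algebra of $a(t)=\sum_ka_kt^k$ with $\sum_k|a_k|<\infty$. Complementary $N$-functions: for $p:[0,\infty)\to[0,\infty)$ right-continuous non-decreasing with $p(0)=0$, $p(t)>0$ for $t>0$, $p(t)\to\infty$, and $q(s)=\sup\{t:p(t)\le s\}$, set $\Phi(x)=\int_0^xp$, $\Psi(x)=\int_0^xq$. $\Delta_2^0$-condition: $\limsup_{x\to0}\Phi(2x)/\Phi(x)<\infty$. $\mathcal{W}$: sequences $\{\nu_k\}_{k\ge0}$ of positive numbers with $\nu_0=1$, non-decreasing, and $\nu_{2k}\le C_\nu\nu_k$ ($k\in\mathbb{N}$) for some constant $C_\nu$. For $\mathbb{I}\in\{\mathbb{N},\mathbb{Z}_+\}$, an $N$-function $\Theta$ and a weight sequence $w$, $\ell^\Theta_w(\mathbb{I})$ is the space of complex sequences $(c_k)_{k\in\mathbb{I}}$ with $\sum_k\Theta(|c_k|w_k/\lambda)<\infty$ for some $\lambda>0$, normed by $\|c\|=\inf\{\lambda>0:\sum_k\Theta(|c_k|w_k/\lambda)\le1\}$; $\ell^\Theta(\mathbb{I})$ is the case $w_k\equiv1$. $F\ell_{\varphi,\psi}^{\Phi,\Psi}$ is the set of $a\in L^1(\mathbb{T})$ with $\sum_{k\ge1}\Phi(|a_{-k}|\varphi_k)+\sum_{k\ge0}\Psi(|a_k|\psi_k)<\infty$, normed by $\|a\|_{F\ell_{\varphi,\psi}^{\Phi,\Psi}}=\|\{a_{-k}\}_{k\in\mathbb{N}}\|_{\ell^\Phi_\varphi(\mathbb{N})}+\|\{a_k\}_{k\in\mathbb{Z}_+}\|_{\ell^\Psi_\psi(\mathbb{Z}_+)}$.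 For $m\in\mathbb{Z}_+$, $a^{(m)}(t)=\sum_{k=-m}^ma_kt^k$. $T(a)$ is the Toeplitz operator on sequences $(c_k)_{k\ge0}$ with matrix $(a_{j-k})_{j,k\ge0}$. $P_n$ maps $(c_k)_{k\ge0}$ to $(c_0,\dots,c_n,0,0,\dots)$, $Q_n=I-P_n$, $\Delta_0=P_0$, $\Delta_j=P_j-P_{j-1}$. $\mathcal{B}(X)$ is the algebra of bounded operators on $X$ with the operator norm. *)

From Stdlib Require Import Reals ZArith.
From Coquelicot Require Import Coquelicot.
Open Scope R_scope.

(** Generating function p of an N-function: p : [0,oo) -> [0,oo),
    right-continuous, non-decreasing, p 0 = 0, p t > 0 for t > 0, p t -> oo.
    (Values of p on negative reals are irrelevant.) *)
Definition N_generator (p : R -> R) : Prop :=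
  (forall s t, 0 <= s -> s <= t -> p s <= p t) /\
  p 0 = 0 /\
  (forall t, 0 < t -> 0 < p t) /\
  (forall t, 0 <= t -> filterlim p (at_right t) (locally (p t))) /\
  filterlim p (Rbar_locally p_infty) (Rbar_locally p_infty).

Definition q_of (p : R -> R) (s : R) : R :=
  real (Lub_Rbar (fun t => 0 <= t /\ p t <= s)).

Definition Phi_of (p : R -> R) (x : R) : R := RInt p 0 x.
Definition Psi_of (p : R -> R) (x : R) : R := RInt (q_of p) 0 x.

(** Delta_2^0 condition: limsup_{x -> 0+} Theta(2x)/Theta(x) < oo,
    i.e. the ratio is eventually bounded near 0. *)
Definition Delta2_0 (Theta : R -> R) : Prop :=
  exists M delta, 0 < delta /\
    forall x, 0 < x < delta -> Theta (2 * x) / Theta x <= M.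

Definition weight_W (nu : nat -> R) : Prop :=
  nu 0%nat = 1 /\
  (forall k, 0 < nu k) /\
  (forall k l, (k <= l)%nat -> nu k <= nu l) /\
  exists Cnu, forall k, (1 <= k)%nat -> nu (2 * k)%nat <= Cnu * nu k.

(** Orlicz modular space on a sequence of nonnegative reals x
    (x k = |c_k| w_k): membership and Luxemburg norm. *)
Definition in_orlicz (Theta : R -> R) (x : nat -> R) : Prop :=
  exists lam, 0 < lam /\ ex_series (fun k => Theta (x k / lam)).

Definition lux_norm (Theta : R -> R) (x : nat -> R) : R :=
  real (Glb_Rbar (fun lam => 0 < lam /\
          ex_series (fun k => Theta (x k / lam)) /\
          Series (fun k => Theta (x k / lam)) <= 1)).

Definition cseq := nat -> C.
Definition op := cseq -> cseq.

Definition in_lTheta (Theta : R -> R) (c : cseq) : Prop :=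
  in_orlicz Theta (fun k => Cmod (c k)).
Definition lTheta_norm (Theta : R -> R) (c : cseq) : R :=
  lux_norm Theta (fun k => Cmod (c k)).

(** Operator norm in B(ell^Theta(Z_+)): infimum of the bounds K
    (= +oo if the operator is not bounded on ell^Theta). *)
Definition op_norm (Theta : R -> R) (A : op) : Rbar :=
  Glb_Rbar (fun K => 0 <= K /\
    forall c, in_lTheta Theta c ->
      in_lTheta Theta (A c) /\
      lTheta_norm Theta (A c) <= K * lTheta_norm Theta c).

Definition csum (u : nat -> C) : C :=
  (Series (fun k => fst (u k)), Series (fun k => snd (u k))).

(** Functions a in L^1(T) with Fourier coefficients a : Z -> C;
    Wiener algebra: absolutely summable coefficients. *)
Definition coeffs := Z -> C.

Definition in_Wiener (a : coeffs) : Prop :=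
  ex_series (fun k => Cmod (a (Z.of_nat k))) /\
  ex_series (fun k => Cmod (a (- Z.of_nat (S k))%Z)).

Definition in_Fl (Phi Psi : R -> R) (phi psi : nat -> R) (a : coeffs) : Prop :=
  ex_series (fun k => Phi (Cmod (a (- Z.of_nat (S k))%Z) * phi (S k))) /\
  ex_series (fun k => Psi (Cmod (a (Z.of_nat k)) * psi k)).

Definition Fl_norm (Phi Psi : R -> R) (phi psi : nat -> R) (a : coeffs) : R :=
  lux_norm Phi (fun k => Cmod (a (- Z.of_nat (S k))%Z) * phi (S k)) +
  lux_norm Psi (fun k => Cmod (a (Z.of_nat k)) * psi k).

Definition trunc (m : nat) (a : coeffs) : coeffs :=
  fun k => if ((- Z.of_nat m <=? k)%Z && (k <=? Z.of_nat m)%Z)%bool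
           then a k else RtoC 0.
Definition csub (a b : coeffs) : coeffs := fun k => Cminus (a k) (b k).

Definition Toeplitz (a : coeffs) : op :=
  fun c i => csum (fun k => Cmult (a (Z.of_nat i - Z.of_nat k)%Z) (c k)).

Definition Pn (n : nat) : op :=
  fun c i => if (i <=? n)%nat then c i else RtoC 0.
Definition Qn (n : nat) : op := fun c i => Cminus (c i) (Pn n c i).
Definition DeltaJ (j : nat) : op :=
  match j with
  | O => Pn 0
  | S j' => fun c i => Cminus (Pn (S j') c i) (Pn j' c i)
  end.

Definition compo (A B : op) : op := fun c => A (B c).

From Stdlib Require Import Reals ZArith Lra Lia ClassicalEpsilon.
From Coquelicot Require Import Coquelicot.
Open Scope R_scope.
Set Bullet Behavior "Strict Subproofs".

(* [Q_n T(a) Δ_j] sends [c] to [(a_(i-j) c_j)_(i > n)], and [Δ_j T(a) Q_n] sends it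
   to the single entry [Σ_(k > n) a_(j-k) c_k] at index [j].  Both only see the
   coefficients [a_m] with [|m| > n - j], i.e. those of [a - a^(n-j)], and on them the
   weights dominate [ψ_(n-j+1)], resp. [φ_(n-j+1)].  For the first operator,
   [Ψ(|c_j|/λ) <= 1] forces [|c_j| <= t0 λ]; for the second, Young's inequality
   [uv <= Φ(2u) + Ψ(2v)] bounds the entry by the sum of the two modulars.  Both bounds
   are bilinear in admissible Luxemburg scales, which yields the operator norm
   estimates. *)

Lemma ex_RInt_level_step (G : R -> R) (e a b : R) : a <= b ->
  (forall x y, x <= y -> G x <= G y) ->
  ex_RInt (fun x => if Rle_dec e (G x) then e else 0) a b.
Proof.
  intros hab hG.
  set (E := fun x => x = a \/ (a <= x <= b /\ G x < e)).
  destruct (Lub_Rbar_correct E) as [hub hlub].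
  assert (ha : Rbar_le a (Lub_Rbar E)) by (apply hub; left; reflexivity).
  assert (hb : Rbar_le (Lub_Rbar E) b).
  { apply hlub. intros x [->|[[? ?] _]]; simpl; lra. }
  destruct (Lub_Rbar E) as [s| |]; simpl in ha, hb; try contradiction.
  (* [s] is the point where [G] crosses the level [e]. *)
  assert (below : forall x, a < x < s -> G x < e).
  { intros x hx. destruct (Rlt_dec (G x) e) as [h|h]; auto. exfalso.
    assert (hsx : Rbar_le s x).
    { apply hlub. intros y [->|[_ hy]]; simpl; try lra.
      destruct (Rle_dec x y) as [hxy|hxy]; [|lra].
      specialize (hG _ _ hxy). lra. }
    simpl in hsx; lra. }
  assert (above : forall x, s < x < b -> e <= G x).
  { intros x hx. destruct (Rle_dec e (G x)) as [h|h]; auto. exfalso.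
    assert (hxs : Rbar_le x s) by (apply hub; right; split; lra).
    simpl in hxs; lra. }
  apply ex_RInt_Chasles with s.
  - apply ex_RInt_ext with (fun _ => 0); [|apply ex_RInt_const].
    intros x hx. rewrite Rmin_left, Rmax_right in hx by lra.
    destruct (Rle_dec e (G x)); auto. specialize (below x hx); lra.
  - apply ex_RInt_ext with (fun _ => e); [|apply ex_RInt_const].
    intros x hx. rewrite Rmin_left, Rmax_right in hx by lra.
    destruct (Rle_dec e (G x)); auto. specialize (above x hx); lra.
Qed.

Lemma nondecreasing_layer_approx (e a b : R) (K : nat) (G : R -> R) :
  0 < e -> a <= b -> (forall x y, x <= y -> G x <= G y) ->
  (forall x, 0 <= G x <= INR K * e) ->
  exists phi : R -> R, ex_RInt phi a b /\
    forall x, 0 <= phi x <= G x /\ G x - phi x <= e.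
Proof.
  intros he hab. revert G. induction K as [|K IH]; intros G hG hbound.
  - exists (fun _ => 0). split; [apply ex_RInt_const|].
    intros x. specialize (hbound x). simpl in hbound. lra.
  - (* Peel off the top layer [{G >= e}] and recurse on [max (G - e) 0]. *)
    destruct (IH (fun x => Rmax (G x - e) 0)) as [phi [hint hphi]].
    + intros x y hxy. specialize (hG _ _ hxy). unfold Rmax; repeat destruct Rle_dec; lra.
    + intros x. specialize (hbound x). rewrite S_INR in hbound.
      pose proof (pos_INR K). assert (0 <= INR K * e) by nra.
      unfold Rmax; destruct Rle_dec; lra.
    + exists (fun x => (if Rle_dec e (G x) then e else 0) + phi x). split.
      * apply (ex_RInt_plus (V := R_NormedModule)); [apply ex_RInt_level_step|]; auto.
      * intros x. specialize (hphi x). specialize (hbound x).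
        destruct (Rle_dec e (G x)).
        -- rewrite Rmax_left in hphi by lra. lra.
        -- rewrite Rmax_right in hphi by lra. lra.
Qed.

Lemma ex_RInt_uniform_limit (G : R -> R) (a b : R) :
  (forall eps : posreal, exists phi : R -> R,
      ex_RInt phi a b /\ forall x, Rabs (phi x - G x) <= eps) ->
  ex_RInt G a b.
Proof.
  intros happrox.
  assert (hseq : forall N : nat, exists phi : R -> R,
      ex_RInt phi a b /\ forall x, Rabs (phi x - G x) <= / (INR N + 1)).
  { intros N. exact (happrox (mkposreal _ (RinvN_pos N))). }
  set (phis := fun N => proj1_sig (constructive_indefinite_description _ (hseq N))).
  assert (hphis : forall N, ex_RInt (phis N) a b /\
      forall x, Rabs (phis N x - G x) <= / (INR N + 1)).
  { intros N. unfold phis. destruct constructive_indefinite_description; auto. }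
  assert (hlim : filterlim phis eventually
      (locally (G : fct_UniformSpace R R_UniformSpace))).
  { apply filterlim_locally. intros eps.
    destruct (archimed_cor1 eps (cond_pos eps)) as [N0 [hN0 hN0pos]].
    exists N0. intros N hN x. change (Rabs (phis N x - G x) < eps).
    assert (hle : / (INR N + 1) <= / INR N0).
    { apply Rinv_le_contravar; [apply lt_0_INR; lia|].
      apply le_INR in hN. lra. }
    pose proof (proj2 (hphis N) x). lra. }
  destruct (filterlim_RInt (V := R_CompleteNormedModule) phis a b eventually
      eventually_filter G (fun N => RInt (phis N) a b)) as [If [_ hIf]].
  - intros N. apply (RInt_correct (V := R_CompleteNormedModule)), hphis.
  - exact hlim.
  - exists If. exact hIf.
Qed.

Lemma ex_RInt_nondecreasing_bounded (G : R -> R) (a b M : R) : a <= b ->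
  (forall x y, x <= y -> G x <= G y) -> (forall x, 0 <= G x <= M) ->
  ex_RInt G a b.
Proof.
  intros hab hG hM. apply ex_RInt_uniform_limit. intros eps.
  destruct (INR_archimed eps M (cond_pos eps)) as [K hK].
  destruct (nondecreasing_layer_approx eps a b K G) as [phi [hint hphi]]; auto.
  - apply cond_pos.
  - intros x. specialize (hM x). lra.
  - exists phi. split; auto. intros x. specialize (hphi x).
    rewrite Rabs_left1; lra.
Qed.

Lemma ex_RInt_nondecreasing (g : R -> R) (a b : R) : a <= b ->
  (forall x y, a <= x -> x <= y -> y <= b -> g x <= g y) -> ex_RInt g a b.
Proof.
  intros hab hg.
  set (clamp := fun x => Rmax a (Rmin x b)).
  assert (hclamp : forall x, a <= clamp x <= b).
  { intros x. unfold clamp, Rmax, Rmin. repeat destruct Rle_dec; lra. }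
  assert (hG : ex_RInt (fun x => g (clamp x) - g a) a b).
  { apply ex_RInt_nondecreasing_bounded with (g b - g a); auto.
    - intros x y hxy. assert (g (clamp x) <= g (clamp y)); [|lra].
      apply hg; try apply hclamp. unfold clamp, Rmax, Rmin; repeat destruct Rle_dec; lra.
    - intros x. pose proof (hclamp x).
      assert (g a <= g (clamp x)) by (apply hg; lra).
      assert (g (clamp x) <= g b) by (apply hg; lra). lra. }
  apply ex_RInt_ext with (fun x => (g (clamp x) - g a) + g a).
  - intros x hx. rewrite Rmin_left, Rmax_right in hx by lra.
    replace (clamp x) with x; [lra|].
    unfold clamp, Rmax, Rmin; repeat destruct Rle_dec; lra.
  - apply (ex_RInt_plus (V := R_NormedModule)); [exact hG|apply ex_RInt_const].
Qed.

Definition nonneg_nondecreasing (g : R -> R) : Prop :=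
  (forall x y, 0 <= x -> x <= y -> g x <= g y) /\ (forall x, 0 <= x -> 0 <= g x).

Lemma ex_RInt_nonneg_nondecreasing (g : R -> R) (a b : R) :
  nonneg_nondecreasing g -> 0 <= a -> a <= b -> ex_RInt g a b.
Proof.
  intros [hmono _] ha hab. apply ex_RInt_nondecreasing; auto.
  intros x y hx hxy _. apply hmono; lra.
Qed.

Lemma RInt_nonneg_nondecreasing_bounds (g : R -> R) (a b : R) :
  nonneg_nondecreasing g -> 0 <= a -> a <= b ->
  (b - a) * g a <= RInt g a b <= (b - a) * g b.
Proof.
  intros hg ha hab. pose proof (ex_RInt_nonneg_nondecreasing g a b hg ha hab) as hint.
  destruct hg as [hmono _].
  assert (hconst : forall v, RInt (fun _ => v) a b = (b - a) * v)
    by (intros v; rewrite RInt_const; reflexivity).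
  rewrite <- !hconst.
  split; apply RInt_le; auto; try apply ex_RInt_const;
    intros x hx; apply hmono; lra.
Qed.

Lemma RInt_nonneg_nondecreasing_Chasles (g : R -> R) (a b c : R) :
  nonneg_nondecreasing g -> 0 <= a -> a <= b -> b <= c ->
  RInt g a c = RInt g a b + RInt g b c.
Proof.
  intros hg ha hab hbc. symmetry.
  apply (RInt_Chasles (V := R_CompleteNormedModule));
    apply ex_RInt_nonneg_nondecreasing; auto; lra.
Qed.

Lemma RInt_nonneg_nondecreasing_ge0 (g : R -> R) (x : R) :
  nonneg_nondecreasing g -> 0 <= x -> 0 <= RInt g 0 x.
Proof.
  intros hg hx. pose proof (RInt_nonneg_nondecreasing_bounds g 0 x hg (Rle_refl 0) hx).
  pose proof (proj2 hg 0 (Rle_refl 0)). nra.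
Qed.

Lemma RInt_nonneg_nondecreasing_mono (g : R -> R) (x y : R) :
  nonneg_nondecreasing g -> 0 <= x -> x <= y -> RInt g 0 x <= RInt g 0 y.
Proof.
  intros hg hx hxy. rewrite (RInt_nonneg_nondecreasing_Chasles g 0 x y) by (auto; lra).
  pose proof (RInt_nonneg_nondecreasing_bounds g x y hg hx hxy).
  pose proof (proj2 hg x hx). nra.
Qed.

Lemma RInt_nonneg_nondecreasing_double (g : R -> R) (x : R) :
  nonneg_nondecreasing g -> 0 <= x -> x * g x <= RInt g 0 (2 * x).
Proof.
  intros hg hx. rewrite (RInt_nonneg_nondecreasing_Chasles g 0 x (2 * x)) by (auto; lra).
  pose proof (RInt_nonneg_nondecreasing_bounds g x (2 * x) hg hx ltac:(lra)).
  pose proof (RInt_nonneg_nondecreasing_ge0 g x hg hx). lra.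
Qed.

Lemma RInt_nonneg_nondecreasing_subhom (g : R -> R) (t s : R) :
  nonneg_nondecreasing g -> 0 <= t <= 1 -> 0 <= s ->
  RInt g 0 (t * s) <= t * RInt g 0 s.
Proof.
  intros hg ht hs.
  assert (hts : 0 <= t * s) by nra. assert (hts_s : t * s <= s) by nra.
  rewrite (RInt_nonneg_nondecreasing_Chasles g 0 (t * s) s) by (auto; lra).
  pose proof (RInt_nonneg_nondecreasing_bounds g 0 (t * s) hg (Rle_refl 0) hts) as [_ hA].
  pose proof (RInt_nonneg_nondecreasing_bounds g (t * s) s hg hts hts_s) as [hB _].
  pose proof (RInt_nonneg_nondecreasing_ge0 g (t * s) hg hts).
  pose proof (proj2 hg (t * s) hts).
  set (A := RInt g 0 (t * s)) in *. set (B := RInt g (t * s) s) in *.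
  (* [A <= t s g(t s)] and [B >= (1 - t) s g(t s)]. *)
  assert ((1 - t) * A <= t * B).
  { apply Rle_trans with ((1 - t) * (t * s * g (t * s))); [apply Rmult_le_compat_l; lra|].
    replace ((1 - t) * (t * s * g (t * s))) with (t * ((s - t * s) * g (t * s))) by ring.
    apply Rmult_le_compat_l; lra. }
  nra.
Qed.

Record orlicz_function (Th : R -> R) : Prop := {
  orlicz_0 : Th 0 = 0;
  orlicz_ge0 : forall x, 0 <= x -> 0 <= Th x;
  orlicz_mono : forall x y, 0 <= x -> x <= y -> Th x <= Th y;
  orlicz_subhom : forall t s, 0 <= t <= 1 -> 0 <= s -> Th (t * s) <= t * Th s }.

Lemma orlicz_function_RInt (g : R -> R) :
  nonneg_nondecreasing g -> orlicz_function (fun x => RInt g 0 x).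
Proof.
  intros hg. split.
  - rewrite RInt_point. reflexivity.
  - intros; apply RInt_nonneg_nondecreasing_ge0; auto.
  - intros; apply RInt_nonneg_nondecreasing_mono; auto.
  - intros; apply RInt_nonneg_nondecreasing_subhom; auto.
Qed.

Lemma orlicz_function_le1_pos (Th : R -> R) :
  orlicz_function Th -> exists u0, 0 < u0 /\ Th u0 <= 1.
Proof.
  intros hTh. pose proof (orlicz_ge0 Th hTh 1 ltac:(lra)) as h1.
  exists (/ (1 + Th 1)). split; [apply Rinv_0_lt_compat; lra|].
  assert (hu : 0 <= / (1 + Th 1) <= 1).
  { split; [apply Rlt_le, Rinv_0_lt_compat; lra|].
    apply Rmult_le_reg_l with (1 + Th 1); [lra|]. rewrite Rinv_r; lra. }
  pose proof (orlicz_subhom Th hTh _ 1 hu ltac:(lra)) as hsub.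
  rewrite Rmult_1_r in hsub. eapply Rle_trans; [exact hsub|].
  apply Rmult_le_reg_l with (1 + Th 1); [lra|].
  rewrite <- Rmult_assoc, Rinv_r by lra. lra.
Qed.

Lemma RInt_le1_bounded (g : R -> R) :
  nonneg_nondecreasing g -> 0 < g 1 ->
  exists t0, 0 < t0 /\ forall x, 0 <= x -> RInt g 0 x <= 1 -> x <= t0.
Proof.
  intros hg hg1. set (x1 := 1 + / g 1).
  assert (hx1 : 1 <= x1) by (unfold x1; pose proof (Rinv_0_lt_compat _ hg1); lra).
  exists (2 * x1). split; [lra|].
  intros x hx hle. destruct (Rle_dec x (2 * x1)) as [h|h]; auto. exfalso.
  (* Beyond [2 x1] the primitive exceeds [x1 g 1 = g 1 + 1 > 1]. *)
  pose proof (RInt_nonneg_nondecreasing_double g x1 hg ltac:(lra)).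
  pose proof (RInt_nonneg_nondecreasing_mono g (2 * x1) x hg ltac:(lra) ltac:(lra)).
  assert (g 1 <= g x1) by (apply (proj1 hg); lra).
  assert (x1 * g 1 = g 1 + 1) by (unfold x1; field; lra).
  assert (x1 * g 1 <= x1 * g x1) by (apply Rmult_le_compat_l; lra).
  lra.
Qed.

Lemma N_generator_nonneg_nondecreasing (p : R -> R) :
  N_generator p -> nonneg_nondecreasing p.
Proof.
  intros [hmono [h0 _]]. split; [intros; apply hmono; lra|].
  intros x hx. rewrite <- h0. apply hmono; lra.
Qed.

Lemma q_of_Lub (p : R -> R) (s : R) : N_generator p -> 0 <= s ->
  Lub_Rbar (fun t => 0 <= t /\ p t <= s) = Finite (q_of p s) /\ 0 <= q_of p s.
Proof.
  intros hp hs. pose proof hp as [_ [h0 [_ [_ hinf]]]].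
  destruct (hinf (fun y => s < y)) as [T hT]; [exists s; auto|].
  destruct (Lub_Rbar_correct (fun t => 0 <= t /\ p t <= s)) as [hub hlub].
  assert (hlo : Rbar_le 0 (Lub_Rbar (fun t => 0 <= t /\ p t <= s)))
    by (apply hub; split; lra).
  assert (hhi : Rbar_le (Lub_Rbar (fun t => 0 <= t /\ p t <= s)) T).
  { apply hlub. intros t [_ ht]. simpl.
    destruct (Rle_dec t T); auto. specialize (hT t ltac:(lra)). lra. }
  unfold q_of. destruct (Lub_Rbar _); simpl in *; try contradiction. auto.
Qed.

Lemma q_of_ge (p : R -> R) (s t : R) : N_generator p -> 0 <= s -> 0 <= t ->
  p t <= s -> t <= q_of p s.
Proof.
  intros hp hs ht hpt. destruct (q_of_Lub p s hp hs) as [hq _].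
  destruct (Lub_Rbar_correct (fun t => 0 <= t /\ p t <= s)) as [hub _].
  rewrite hq in hub. apply (hub t). auto.
Qed.

Lemma q_of_le (p : R -> R) (s B : R) : N_generator p -> 0 <= s ->
  (forall t, 0 <= t -> p t <= s -> t <= B) -> q_of p s <= B.
Proof.
  intros hp hs hB. destruct (q_of_Lub p s hp hs) as [hq _].
  destruct (Lub_Rbar_correct (fun t => 0 <= t /\ p t <= s)) as [_ hlub].
  rewrite hq in hlub. apply (hlub B). intros t [ht1 ht2]. simpl. auto.
Qed.

Lemma q_of_nonneg_nondecreasing (p : R -> R) :
  N_generator p -> nonneg_nondecreasing (q_of p).
Proof.
  intros hp. split.
  - intros x y hx hxy. apply q_of_le; auto; try lra.
    intros t ht hpt. apply q_of_ge; auto; lra.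
  - intros x hx. apply (q_of_Lub p x hp hx).
Qed.

Lemma q_of_pos (p : R -> R) (v : R) : N_generator p -> 0 < v -> 0 < q_of p v.
Proof.
  intros hp hv. pose proof hp as [_ [h0 [_ [hrc _]]]].
  (* Right continuity at 0 gives some [d > 0] with [p (d/2) < v]. *)
  destruct (proj1 (filterlim_locally _ _) (hrc 0 (Rle_refl 0)) (mkposreal v hv))
    as [d hd].
  pose proof (cond_pos d) as hd0.
  assert (hball : ball 0 d (d / 2)).
  { change (Rabs (d / 2 + - 0) < d). rewrite Rabs_right; lra. }
  specialize (hd (d / 2) hball ltac:(lra)).
  change (Rabs (p (d / 2) + - p 0) < v) in hd. rewrite h0 in hd.
  apply Rabs_def2 in hd.
  assert (d / 2 <= q_of p v) by (apply q_of_ge; auto; lra). lra.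
Qed.

Lemma young_ineq (p : R -> R) : N_generator p ->
  forall u v, 0 <= u -> 0 <= v -> u * v <= Phi_of p (2 * u) + Psi_of p (2 * v).
Proof.
  intros hp u v hu hv. unfold Phi_of, Psi_of.
  pose proof (N_generator_nonneg_nondecreasing p hp) as hpg.
  pose proof (q_of_nonneg_nondecreasing p hp) as hqg.
  pose proof (RInt_nonneg_nondecreasing_double p u hpg hu).
  pose proof (RInt_nonneg_nondecreasing_double (q_of p) v hqg hv).
  pose proof (RInt_nonneg_nondecreasing_ge0 p (2 * u) hpg ltac:(lra)).
  pose proof (RInt_nonneg_nondecreasing_ge0 (q_of p) (2 * v) hqg ltac:(lra)).
  (* Either [v <= p u] or [u <= q v]; and [x g x <= int_0^(2x) g]. *)
  destruct (Rle_dec v (p u)).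
  - assert (u * v <= u * p u) by (apply Rmult_le_compat_l; lra). lra.
  - assert (u <= q_of p v) by (apply q_of_ge; auto; lra).
    assert (u * v <= v * q_of p v) by nra. lra.
Qed.

Lemma sum_single (j : nat) (v : R) (N : nat) :
  sum_f_R0 (fun k => if Nat.eqb k j then v else 0) N = if Nat.ltb N j then 0 else v.
Proof.
  induction N as [|N IH].
  - destruct j; reflexivity.
  - rewrite tech5, IH.
    destruct (Nat.ltb_spec N j), (Nat.ltb_spec (S N) j), (Nat.eqb_spec (S N) j);
      try lia; lra.
Qed.

Lemma is_series_single (j : nat) (v : R) :
  is_series (fun k => if Nat.eqb k j then v else 0) v.
Proof.
  intros P hP. exists j. intros N hN. rewrite sum_n_Reals, sum_single.
  destruct (Nat.ltb_spec N j); try lia. apply locally_singleton, hP.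
Qed.

Lemma Series_single (j : nat) (v : R) :
  Series (fun k => if Nat.eqb k j then v else 0) = v.
Proof. apply is_series_unique, is_series_single. Qed.

Lemma ex_series_single (j : nat) (v : R) :
  ex_series (fun k => if Nat.eqb k j then v else 0).
Proof. exists v. apply is_series_single. Qed.

Lemma Series_ge_term (f : nat -> R) (j : nat) :
  (forall k, 0 <= f k) -> ex_series f -> f j <= Series f.
Proof.
  intros hf he. rewrite <- (Series_single j (f j)). apply Series_le; auto.
  intros k. destruct (Nat.eqb_spec k j); subst; split; auto; lra.
Qed.

Lemma Series_ge0 (f : nat -> R) : (forall k, 0 <= f k) -> ex_series f -> 0 <= Series f.
Proof. intros hf he. eapply Rle_trans; [apply (hf O)|]. apply Series_ge_term; auto. Qed.

Lemma Series_shift_tail (f : nat -> R) (n d : nat) :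
  (forall k, 0 <= f k) -> ex_series f -> (d <= S n)%nat ->
  ex_series (fun i => if Nat.ltb n i then f (i - d)%nat else 0) /\
  Series (fun i => if Nat.ltb n i then f (i - d)%nat else 0) <= Series f.
Proof.
  intros hf he hd. set (w := fun i => if Nat.ltb n i then f (i - d)%nat else 0).
  set (m := (S n - d)%nat).
  assert (hw : forall k, w (S n + k)%nat = f (m + k)%nat).
  { intros k. unfold w, m. destruct (Nat.ltb_spec n (S n + k)); try lia. f_equal. lia. }
  assert (hef : ex_series (fun k => f (m + k)%nat)) by (apply ex_series_incr_n, he).
  split.
  - apply (ex_series_incr_n w (S n)). apply ex_series_ext with (fun k => f (m + k)%nat); auto.
  - rewrite (Series_incr_n_aux w (S n)).
    2:{ intros k hk. unfold w. destruct (Nat.ltb_spec n k); try lia. reflexivity. }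
    rewrite (Series_ext _ _ hw).
    destruct m as [|m'].
    + apply Req_le, Series_ext. reflexivity.
    + rewrite (Series_incr_n f (S m')) by (auto; lia).
      pose proof (cond_pos_sum f (Nat.pred (S m')) hf). lra.
Qed.

Definition lux_admissible (Th : R -> R) (x : nat -> R) (lam : R) : Prop :=
  0 < lam /\ ex_series (fun k => Th (x k / lam)) /\ Series (fun k => Th (x k / lam)) <= 1.

Lemma lux_norm_ge0 (Th : R -> R) (x : nat -> R) : 0 <= lux_norm Th x.
Proof.
  unfold lux_norm. destruct (Glb_Rbar_correct (lux_admissible Th x)) as [_ hglb].
  assert (h0 : Rbar_le 0 (Glb_Rbar (lux_admissible Th x))).
  { apply hglb. intros l [hl _]. simpl. lra. }
  change (0 <= real (Glb_Rbar (lux_admissible Th x))).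
  destruct (Glb_Rbar (lux_admissible Th x)); simpl in *; lra.
Qed.

Lemma lux_norm_le (Th : R -> R) (x : nat -> R) (lam : R) :
  lux_admissible Th x lam -> lux_norm Th x <= lam.
Proof.
  intros hlam. unfold lux_norm.
  destruct (Glb_Rbar_correct (lux_admissible Th x)) as [hlb hglb].
  assert (h0 : Rbar_le 0 (Glb_Rbar (lux_admissible Th x))).
  { apply hglb. intros l [hl _]. simpl. lra. }
  specialize (hlb lam hlam).
  change (real (Glb_Rbar (lux_admissible Th x)) <= lam).
  destruct (Glb_Rbar (lux_admissible Th x)); simpl in *; try contradiction; lra.
Qed.

Lemma lux_norm_ge (Th : R -> R) (x : nat -> R) (B K : R) :
  (exists lam, lux_admissible Th x lam) -> 0 <= K ->
  (forall lam, lux_admissible Th x lam -> B <= K * lam) -> B <= K * lux_norm Th x.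
Proof.
  intros [l0 hl0] hK hB. destruct (Req_dec K 0) as [->|hK0].
  { specialize (hB l0 hl0). lra. }
  assert (hBK : Rbar_le (B / K) (Glb_Rbar (lux_admissible Th x))).
  { destruct (Glb_Rbar_correct (lux_admissible Th x)) as [_ hglb]. apply hglb.
    intros l hl. specialize (hB l hl). simpl.
    apply Rmult_le_reg_r with K; [lra|]. field_simplify; lra. }
  destruct (Glb_Rbar_correct (lux_admissible Th x)) as [hlb _].
  specialize (hlb l0 hl0). unfold lux_norm.
  change (B <= K * real (Glb_Rbar (lux_admissible Th x))).
  destruct (Glb_Rbar (lux_admissible Th x)); simpl in *; try contradiction.
  apply Rmult_le_reg_r with (/ K); [apply Rinv_0_lt_compat; lra|].
  replace (K * r * / K) with r by (field; lra). exact hBK.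
Qed.

Lemma lux_admissible_dominated (Th : R -> R) (x w : nat -> R) (nu : R) : 0 < nu ->
  (forall i, 0 <= Th (x i / nu) <= w i) -> ex_series w -> Series w <= 1 ->
  lux_admissible Th x nu.
Proof.
  intros hnu hw hwe hws. split; [exact hnu|split].
  - apply (ex_series_le (V := R_CompleteNormedModule)) with w; auto.
    intros i. specialize (hw i). change (Rabs (Th (x i / nu)) <= w i).
    rewrite Rabs_right; lra.
  - eapply Rle_trans; [apply Series_le|]; eauto.
Qed.

Lemma lux_admissible_exists (Th : R -> R) (x : nat -> R) :
  orlicz_function Th -> (forall k, 0 <= x k) -> in_orlicz Th x ->
  exists lam, lux_admissible Th x lam.
Proof.
  intros hTh hx [lam [hlam he]].
  set (s := Series (fun k => Th (x k / lam))).
  assert (hs : 0 <= s).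
  { apply Series_ge0; auto. intros k. apply (orlicz_ge0 Th hTh).
    apply Rdiv_le_0_compat; auto. }
  (* Rescaling by [1 + s] divides the modular by at least [1 + s]. *)
  assert (hscale : forall k, 0 <= Th (x k / (lam * (1 + s))) <= / (1 + s) * Th (x k / lam)).
  { intros k. replace (x k / (lam * (1 + s))) with (/ (1 + s) * (x k / lam))
      by (field; lra).
    assert (hxk : 0 <= x k / lam) by (apply Rdiv_le_0_compat; auto).
    assert (hinv : 0 <= / (1 + s) <= 1).
    { split; [apply Rlt_le, Rinv_0_lt_compat; lra|].
      apply Rmult_le_reg_l with (1 + s); [lra|]. rewrite Rinv_r; lra. }
    split; [apply (orlicz_ge0 Th hTh); nra|]. apply (orlicz_subhom Th hTh); auto. }
  exists (lam * (1 + s)). apply lux_admissible_dominated with (fun k => / (1 + s) * Th (x k / lam)).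
  - nra.
  - exact hscale.
  - apply (ex_series_scal_l (V := R_NormedModule)), he.
  - rewrite Series_scal_l. fold s.
    apply Rmult_le_reg_l with (1 + s); [lra|].
    rewrite <- Rmult_assoc, Rinv_r by lra. lra.
Qed.

Lemma lux_admissible_exists_le (Th : R -> R) (x y : nat -> R) : orlicz_function Th ->
  (forall k, 0 <= x k <= y k) -> ex_series (fun k => Th (y k)) ->
  exists lam, lux_admissible Th x lam.
Proof.
  intros hTh hxy he. apply lux_admissible_exists; auto; [intros k; apply hxy|].
  exists 1. split; [lra|].
  apply (ex_series_le (V := R_CompleteNormedModule)) with (fun k => Th (y k)); auto.
  intros k. specialize (hxy k). change (Rabs (Th (x k / 1)) <= Th (y k)).
  rewrite Rdiv_1_r, Rabs_right; [apply (orlicz_mono Th hTh); lra|].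
  apply Rle_ge, (orlicz_ge0 Th hTh). lra.
Qed.

Lemma lux_norm_le_mul (Th1 Th2 Th3 : R -> R) (x y z : nat -> R) (K : R) : 0 <= K ->
  (exists l, lux_admissible Th1 x l) -> (exists mu, lux_admissible Th2 y mu) ->
  (forall l mu, lux_admissible Th1 x l -> lux_admissible Th2 y mu ->
     lux_admissible Th3 z (K * l * mu)) ->
  in_orlicz Th3 z /\ lux_norm Th3 z <= K * lux_norm Th1 x * lux_norm Th2 y.
Proof.
  intros hK [l0 hl0] [mu0 hmu0] hz. split.
  { destruct (hz l0 mu0 hl0 hmu0) as [hnu [he _]]. exists (K * l0 * mu0). auto. }
  assert (hfix_mu : forall mu, lux_admissible Th2 y mu ->
      lux_norm Th3 z <= (K * mu) * lux_norm Th1 x).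
  { intros mu hmu. apply lux_norm_ge; [eauto| |].
    - destruct hmu as [hmu _]. nra.
    - intros l hl. replace (K * mu * l) with (K * l * mu) by ring.
      apply lux_norm_le, hz; auto. }
  replace (K * lux_norm Th1 x * lux_norm Th2 y)
    with ((K * lux_norm Th1 x) * lux_norm Th2 y) by ring.
  apply lux_norm_ge; [eauto| |].
  - pose proof (lux_norm_ge0 Th1 x). nra.
  - intros mu hmu. replace (K * lux_norm Th1 x * mu) with (K * mu * lux_norm Th1 x) by ring.
    apply hfix_mu, hmu.
Qed.

Lemma op_norm_le_admissible (Th Th' : R -> R) (A : op) (y : nat -> R) (K : R) :
  orlicz_function Th -> 0 <= K -> (exists mu, lux_admissible Th' y mu) ->
  (forall c l mu, lux_admissible Th (fun k => Cmod (c k)) l -> lux_admissible Th' y mu ->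
     lux_admissible Th (fun k => Cmod (A c k)) (K * l * mu)) ->
  Rbar_le (op_norm Th A) (Finite (K * lux_norm Th' y)).
Proof.
  intros hTh hK hy hA. unfold op_norm.
  apply Glb_Rbar_correct. split; [pose proof (lux_norm_ge0 Th' y); nra|].
  intros c hc.
  assert (hcadm : exists l, lux_admissible Th (fun k => Cmod (c k)) l).
  { apply lux_admissible_exists; auto. intros; apply Cmod_ge_0. }
  destruct (lux_norm_le_mul Th Th' Th _ y (fun k => Cmod (A c k)) K hK hcadm hy)
    as [hin hle]; auto.
  split; [exact hin|]. unfold lTheta_norm. lra.
Qed.

Lemma DeltaJ_apply (j : nat) (c : cseq) (i : nat) :
  DeltaJ j c i = if Nat.eqb i j then c i else 0.
Proof.
  destruct j as [|j]; simpl; unfold Pn.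
  - destruct i; reflexivity.
  - destruct (Nat.leb_spec i (S j)), (Nat.leb_spec i j), (Nat.eqb_spec i (S j));
      try lia; ring.
Qed.

Lemma Qn_apply (n : nat) (c : cseq) (i : nat) :
  Qn n c i = if Nat.leb i n then 0 else c i.
Proof. unfold Qn, Pn. destruct (Nat.leb i n); ring. Qed.

Lemma Toeplitz_ext (a : coeffs) (c c' : cseq) (i : nat) :
  (forall k, c k = c' k) -> Toeplitz a c i = Toeplitz a c' i.
Proof.
  intros h. unfold Toeplitz, csum.
  f_equal; apply Series_ext; intros k; rewrite h; reflexivity.
Qed.

Lemma Toeplitz_single (a : coeffs) (j : nat) (v : C) (i : nat) :
  Toeplitz a (fun k => if Nat.eqb k j then v else 0) i =
  Cmult (a (Z.of_nat i - Z.of_nat j)%Z) v.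
Proof.
  set (w := Cmult (a (Z.of_nat i - Z.of_nat j)%Z) v).
  unfold Toeplitz, csum.
  rewrite (Series_ext _ (fun k => if Nat.eqb k j then fst w else 0)),
    (Series_ext (fun k => snd _) (fun k => if Nat.eqb k j then snd w else 0)).
  - rewrite !Series_single. destruct w; reflexivity.
  - intros k. destruct (Nat.eqb_spec k j); subst; [reflexivity|simpl; ring].
  - intros k. destruct (Nat.eqb_spec k j); subst; [reflexivity|simpl; ring].
Qed.

Lemma QTDelta_apply (a : coeffs) (n j : nat) (c : cseq) (i : nat) :
  compo (Qn n) (compo (Toeplitz a) (DeltaJ j)) c i =
  if Nat.leb i n then 0 else Cmult (a (Z.of_nat i - Z.of_nat j)%Z) (c j).
Proof.
  unfold compo. rewrite Qn_apply. destruct (Nat.leb i n); [reflexivity|].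
  rewrite (Toeplitz_ext a _ (fun k => if Nat.eqb k j then c j else 0)).
  - apply Toeplitz_single.
  - intros k. rewrite DeltaJ_apply. destruct (Nat.eqb_spec k j); subst; reflexivity.
Qed.

Lemma DeltaTQ_apply (a : coeffs) (n j : nat) (c : cseq) (i : nat) :
  compo (DeltaJ j) (compo (Toeplitz a) (Qn n)) c i =
  if Nat.eqb i j then Toeplitz a (Qn n c) j else 0.
Proof.
  unfold compo. rewrite DeltaJ_apply. destruct (Nat.eqb_spec i j); subst; reflexivity.
Qed.

Lemma Cmod_csum_le (u : nat -> C) (B : nat -> R) :
  (forall k, Cmod (u k) <= B k) -> ex_series B -> Cmod (csum u) <= 2 * Series B.
Proof.
  intros hu hB.
  assert (hpart : forall f : C -> R, (forall z, Rabs (f z) <= Cmod z) ->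
      Rabs (Series (fun k => f (u k))) <= Series B).
  { intros f hf. assert (hfu : forall k, Rabs (f (u k)) <= B k)
      by (intros k; eapply Rle_trans; [apply hf|apply hu]).
    assert (he : ex_series (fun k => Rabs (f (u k)))).
    { apply (ex_series_le (V := R_CompleteNormedModule)) with B; auto.
      intros k. change (Rabs (Rabs (f (u k))) <= B k). rewrite Rabs_Rabsolu. auto. }
    eapply Rle_trans; [apply Series_Rabs, he|].
    apply Series_le; auto. intros k; split; [apply Rabs_pos|auto]. }
  pose proof (hpart fst (fun z => Rle_trans _ _ _ (Rmax_l _ _) (Rmax_Cmod z))) as hre.
  pose proof (hpart snd (fun z => Rle_trans _ _ _ (Rmax_r _ _) (Rmax_Cmod z))) as him.
  unfold csum. eapply Rle_trans; [apply Cmod_2Rmax|]. simpl.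
  assert (hsqrt2 : sqrt 2 <= 2).
  { rewrite <- (sqrt_square 2) at 2 by lra. apply sqrt_le_1_alt. lra. }
  pose proof (Rmax_lub _ _ _ hre him) as hmax.
  assert (0 <= Rmax (Rabs (Series (fun k => fst (u k)))) (Rabs (Series (fun k => snd (u k)))))
    by (eapply Rle_trans; [apply Rabs_pos|apply Rmax_l]).
  pose proof (sqrt_pos 2). nra.
Qed.

Definition wcoef_plus (psi : nat -> R) (b : coeffs) : nat -> R :=
  fun k => Cmod (b (Z.of_nat k)) * psi k.

Definition wcoef_minus (phi : nat -> R) (b : coeffs) : nat -> R :=
  fun k => Cmod (b (- Z.of_nat (S k))%Z) * phi (S k).

Lemma csub_trunc_pos (a : coeffs) (N k : nat) :
  (N < k)%nat -> csub a (trunc N a) (Z.of_nat k) = a (Z.of_nat k).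
Proof.
  intros h. unfold csub, trunc.
  destruct (Z.leb_spec (Z.of_nat k) (Z.of_nat N)); try lia.
  rewrite Bool.andb_false_r. ring.
Qed.

Lemma csub_trunc_neg (a : coeffs) (N k : nat) :
  (N < k)%nat -> csub a (trunc N a) (- Z.of_nat k)%Z = a (- Z.of_nat k)%Z.
Proof.
  intros h. unfold csub, trunc.
  destruct (Z.leb_spec (- Z.of_nat N) (- Z.of_nat k)); try lia. simpl. ring.
Qed.

Lemma Cmod_csub_trunc_le (a : coeffs) (N : nat) (k : Z) :
  Cmod (csub a (trunc N a) k) <= Cmod (a k).
Proof.
  unfold csub, trunc. destruct (_ && _)%bool.
  - replace (Cminus (a k) (a k)) with (RtoC 0) by ring.
    rewrite Cmod_0. apply Cmod_ge_0.
  - replace (Cminus (a k) (RtoC 0)) with (a k) by ring. lra.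
Qed.

Lemma weight_pos (nu : nat -> R) (k : nat) : weight_W nu -> 0 < nu k.
Proof. intros [_ [h _]]. apply h. Qed.

Lemma weight_mono (nu : nat -> R) (k l : nat) : weight_W nu -> (k <= l)%nat -> nu k <= nu l.
Proof. intros [_ [_ [h _]]] hkl. auto. Qed.

Lemma wcoef_plus_trunc_le (psi : nat -> R) (a : coeffs) (N k : nat) : weight_W psi ->
  0 <= wcoef_plus psi (csub a (trunc N a)) k <= wcoef_plus psi a k.
Proof.
  intros hpsi. pose proof (weight_pos psi k hpsi). unfold wcoef_plus. split.
  - apply Rmult_le_pos; [apply Cmod_ge_0|lra].
  - apply Rmult_le_compat_r; [lra|apply Cmod_csub_trunc_le].
Qed.

Lemma wcoef_minus_trunc_le (phi : nat -> R) (a : coeffs) (N k : nat) : weight_W phi ->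
  0 <= wcoef_minus phi (csub a (trunc N a)) k <= wcoef_minus phi a k.
Proof.
  intros hphi. pose proof (weight_pos phi (S k) hphi). unfold wcoef_minus. split.
  - apply Rmult_le_pos; [apply Cmod_ge_0|lra].
  - apply Rmult_le_compat_r; [lra|apply Cmod_csub_trunc_le].
Qed.

Lemma QTDelta_entry_le (Th : R -> R) (psi : nat -> R) (a : coeffs) (n j i : nat)
    (t0 : R) (c : cseq) (l mu : R) :
  orlicz_function Th -> weight_W psi -> (j <= n < i)%nat -> 0 < t0 -> 0 < l -> 0 < mu ->
  Cmod (c j) / l <= t0 ->
  Th (Cmod (Cmult (a (Z.of_nat i - Z.of_nat j)%Z) (c j)) / (t0 / psi (n - j + 1)%nat * l * mu))
  <= Th (wcoef_plus psi (csub a (trunc (n - j) a)) (i - j) / mu).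
Proof.
  intros hTh hpsi hij ht0 hl hmu hcj.
  unfold wcoef_plus. rewrite csub_trunc_pos, Cmod_mult by lia.
  replace (Z.of_nat i - Z.of_nat j)%Z with (Z.of_nat (i - j)) by lia.
  set (A := Cmod (a (Z.of_nat (i - j)))). set (X := Cmod (c j)) in *.
  set (m := (n - j + 1)%nat).
  assert (hA : 0 <= A) by apply Cmod_ge_0. assert (hX : 0 <= X) by apply Cmod_ge_0.
  pose proof (weight_pos psi m hpsi) as hpm.
  assert (hpsi_le : psi m <= psi (i - j)%nat) by (apply weight_mono; auto; unfold m; lia).
  apply (orlicz_mono Th hTh).
  { apply Rdiv_le_0_compat; [nra|].
    repeat apply Rmult_lt_0_compat; auto. apply Rinv_0_lt_compat; auto. }
  replace (A * X / (t0 / psi m * l * mu)) with ((A * psi m / mu) * (X / l / t0))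
    by (field; repeat split; lra).
  assert (hXl : 0 <= X / l / t0 <= 1).
  { split; [repeat apply Rdiv_le_0_compat; lra|].
    apply Rmult_le_reg_r with t0; [lra|].
    replace (X / l / t0 * t0) with (X / l) by (field; lra). lra. }
  apply Rle_trans with (A * psi m / mu).
  - assert (0 <= A * psi m / mu) by (apply Rdiv_le_0_compat; nra). nra.
  - unfold Rdiv. apply Rmult_le_compat_r; [apply Rlt_le, Rinv_0_lt_compat; lra|].
    apply Rmult_le_compat_l; auto.
Qed.

Lemma QTDelta_admissible (Th : R -> R) (psi : nat -> R) (a : coeffs) (n j : nat)
    (t0 : R) (c : cseq) (l mu : R) :
  orlicz_function Th -> weight_W psi -> (j <= n)%nat -> 0 < t0 ->
  (forall x, 0 <= x -> Th x <= 1 -> x <= t0) ->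
  lux_admissible Th (fun k => Cmod (c k)) l ->
  lux_admissible Th (wcoef_plus psi (csub a (trunc (n - j) a))) mu ->
  lux_admissible Th (fun i => Cmod (compo (Qn n) (compo (Toeplitz a) (DeltaJ j)) c i))
    (t0 / psi (n - j + 1)%nat * l * mu).
Proof.
  intros hTh hpsi hj ht0 hball hc hy.
  pose proof hc as [hl [hce hcs]]. pose proof hy as [hmu [hye hys]].
  set (y := wcoef_plus psi (csub a (trunc (n - j) a))) in *.
  pose proof (weight_pos psi (n - j + 1) hpsi) as hpm.
  assert (hdiv : forall x lam, 0 <= x -> 0 < lam -> 0 <= Th (x / lam))
    by (intros; apply (orlicz_ge0 Th hTh), Rdiv_le_0_compat; auto).
  (* [c_j] is the only entry of [c] involved. *)
  assert (hcj : Cmod (c j) / l <= t0).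
  { apply hball; [apply Rdiv_le_0_compat; auto; apply Cmod_ge_0|].
    eapply Rle_trans; [|exact hcs].
    apply (Series_ge_term (fun k => Th (Cmod (c k) / l))); auto.
    intros k; apply hdiv; auto; apply Cmod_ge_0. }
  assert (hy0 : forall k, 0 <= Th (y k / mu)).
  { intros k. apply hdiv; auto.
    apply Rmult_le_pos; [apply Cmod_ge_0|apply Rlt_le, weight_pos, hpsi]. }
  destruct (Series_shift_tail (fun k => Th (y k / mu)) n j hy0 hye ltac:(lia)) as [hwe hws].
  apply lux_admissible_dominated
    with (fun i => if Nat.ltb n i then Th (y (i - j)%nat / mu) else 0); auto.
  - repeat apply Rmult_lt_0_compat; auto. apply Rinv_0_lt_compat; auto.
  - intros i. rewrite QTDelta_apply.
    destruct (Nat.leb_spec i n), (Nat.ltb_spec n i); try lia.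
    + rewrite Cmod_0, Rdiv_0_l, (orlicz_0 Th hTh). lra.
    + split; [apply hdiv; [apply Cmod_ge_0|]|apply QTDelta_entry_le; auto; lia].
      repeat apply Rmult_lt_0_compat; auto. apply Rinv_0_lt_compat; auto.
  - lra.
Qed.

Lemma QTDelta_op_norm_le (Th : R -> R) (psi : nat -> R) (a : coeffs) (n j : nat) (t0 : R) :
  orlicz_function Th -> weight_W psi -> (j <= n)%nat -> 0 < t0 ->
  (forall x, 0 <= x -> Th x <= 1 -> x <= t0) ->
  ex_series (fun k => Th (wcoef_plus psi a k)) ->
  Rbar_le (op_norm Th (compo (Qn n) (compo (Toeplitz a) (DeltaJ j))))
    (t0 / psi (n - j + 1)%nat * lux_norm Th (wcoef_plus psi (csub a (trunc (n - j) a)))).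
Proof.
  intros hTh hpsi hj ht0 hball ha.
  apply op_norm_le_admissible; auto.
  - apply Rlt_le, Rdiv_lt_0_compat; [lra|apply weight_pos, hpsi].
  - apply lux_admissible_exists_le with (wcoef_plus psi a); auto.
    intros k; apply wcoef_plus_trunc_le, hpsi.
  - intros c l mu hc hmu. apply QTDelta_admissible; auto.
Qed.

Lemma young_scaled (Ph Ps : R -> R) (X Y l1 l : R) :
  (forall u v, 0 <= u -> 0 <= v -> u * v <= Ph (2 * u) + Ps (2 * v)) ->
  0 <= X -> 0 <= Y -> 0 < l1 -> 0 < l ->
  X * Y <= 4 * l1 * l * (Ph (X / l1) + Ps (Y / l)).
Proof.
  intros hyoung hX hY hl1 hl.
  pose proof (hyoung (X / (2 * l1)) (Y / (2 * l))) as hxy.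
  replace (2 * (X / (2 * l1))) with (X / l1) in hxy by (field; lra).
  replace (2 * (Y / (2 * l))) with (Y / l) in hxy by (field; lra).
  replace (X * Y) with (4 * l1 * l * (X / (2 * l1) * (Y / (2 * l)))) by (field; lra).
  apply Rmult_le_compat_l; [nra|]. apply hxy; apply Rdiv_le_0_compat; lra.
Qed.

Lemma DeltaTQ_term_le (Ph Ps : R -> R) (phi : nat -> R) (a : coeffs) (n j k : nat)
    (c : cseq) (l mu : R) :
  orlicz_function Ph -> orlicz_function Ps ->
  (forall u v, 0 <= u -> 0 <= v -> u * v <= Ph (2 * u) + Ps (2 * v)) ->
  weight_W phi -> (j <= n)%nat -> 0 < l -> 0 < mu ->
  Cmod (Cmult (a (Z.of_nat j - Z.of_nat k)%Z) (Qn n c k)) <=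
  4 * (mu / phi (n - j + 1)%nat) * l *
    ((if Nat.ltb n k
      then Ph (wcoef_minus phi (csub a (trunc (n - j) a)) (k - S j) / mu) else 0)
     + Ps (Cmod (c k) / l)).
Proof.
  intros hPh hPs hyoung hphi hj hl hmu.
  set (m := (n - j + 1)%nat). pose proof (weight_pos phi m hphi) as hpm.
  set (l1 := mu / phi m). assert (hl1 : 0 < l1) by (apply Rdiv_lt_0_compat; auto).
  assert (hc0 : 0 <= Ps (Cmod (c k) / l))
    by (apply (orlicz_ge0 Ps hPs), Rdiv_le_0_compat; auto; apply Cmod_ge_0).
  rewrite Cmod_mult, Qn_apply.
  destruct (Nat.leb_spec k n), (Nat.ltb_spec n k); try lia.
  { rewrite Cmod_0, Rmult_0_r. apply Rmult_le_pos; nra. }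
  set (X := Cmod (a (Z.of_nat j - Z.of_nat k)%Z)).
  assert (hX : 0 <= X) by apply Cmod_ge_0.
  eapply Rle_trans;
    [exact (young_scaled Ph Ps X (Cmod (c k)) l1 l hyoung hX (Cmod_ge_0 _) hl1 hl)|].
  apply Rmult_le_compat_l; [nra|]. apply Rplus_le_compat_r.
  (* [a_(j-k)] is the coefficient of index [-(k-j)] of [a - a^(n-j)],
     weighted by [phi_(k-j) >= phi_m]. *)
  unfold wcoef_minus. replace (S (k - S j)) with (k - j)%nat by lia.
  rewrite csub_trunc_neg by lia.
  replace (- Z.of_nat (k - j))%Z with (Z.of_nat j - Z.of_nat k)%Z by lia.
  fold X. apply (orlicz_mono Ph hPh); [apply Rdiv_le_0_compat; auto|].
  unfold l1. replace (X / (mu / phi m)) with (X * phi m / mu) by (field; lra).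
  unfold Rdiv. apply Rmult_le_compat_r; [apply Rlt_le, Rinv_0_lt_compat; auto|].
  apply Rmult_le_compat_l; auto. apply weight_mono; auto. unfold m; lia.
Qed.

Lemma DeltaTQ_entry_le (Ph Ps : R -> R) (phi : nat -> R) (a : coeffs) (n j : nat)
    (c : cseq) (l mu : R) :
  orlicz_function Ph -> orlicz_function Ps ->
  (forall u v, 0 <= u -> 0 <= v -> u * v <= Ph (2 * u) + Ps (2 * v)) ->
  weight_W phi -> (j <= n)%nat ->
  lux_admissible Ps (fun k => Cmod (c k)) l ->
  lux_admissible Ph (wcoef_minus phi (csub a (trunc (n - j) a))) mu ->
  Cmod (Toeplitz a (Qn n c) j) <= 16 / phi (n - j + 1)%nat * l * mu.
Proof.
  intros hPh hPs hyoung hphi hj [hl [hce hcs]] [hmu [hze hzs]].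
  set (z := wcoef_minus phi (csub a (trunc (n - j) a))) in *.
  set (m := (n - j + 1)%nat).
  pose proof (weight_pos phi m hphi) as hpm.
  assert (hz0 : forall k, 0 <= Ph (z k / mu)).
  { intros k. apply (orlicz_ge0 Ph hPh), Rdiv_le_0_compat; auto.
    apply Rmult_le_pos; [apply Cmod_ge_0|apply Rlt_le, weight_pos, hphi]. }
  destruct (Series_shift_tail (fun k => Ph (z k / mu)) n (S j) hz0 hze ltac:(lia))
    as [hwe hws].
  cbv beta in hwe, hws.
  set (w := fun i => if Nat.ltb n i then Ph (z (i - S j)%nat / mu) else 0) in *.
  set (K := 4 * (mu / phi m) * l).
  assert (hK : 0 <= K) by (unfold K; apply Rmult_le_pos; [|lra];
    apply Rmult_le_pos; [lra|apply Rlt_le, Rdiv_lt_0_compat; auto]).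
  assert (hBe : ex_series (fun k => K * (w k + Ps (Cmod (c k) / l)))).
  { apply ex_series_ext with (fun k => scal K (plus (w k) (Ps (Cmod (c k) / l))));
      [reflexivity|].
    apply (ex_series_scal_l (V := R_NormedModule)), (ex_series_plus (V := R_NormedModule));
      auto. }
  unfold Toeplitz. eapply Rle_trans.
  { apply (Cmod_csum_le _ _ (fun k => DeltaTQ_term_le Ph Ps phi a n j k c l mu
             hPh hPs hyoung hphi hj hl hmu) hBe). }
  rewrite Series_scal_l, Series_plus; auto.
  replace (16 / phi m * l * mu) with (2 * (K * 2)) by (unfold K; field; lra).
  apply Rmult_le_compat_l; [lra|]. apply Rmult_le_compat_l; [exact hK|].
  change (Series w + Series (fun k => Ps (Cmod (c k) / l)) <= 2). lra.
Qed.

Lemma lux_admissible_single (Th : R -> R) (x : nat -> R) (j : nat) (u0 nu : R) :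
  orlicz_function Th -> 0 < nu -> 0 <= u0 -> Th u0 <= 1 ->
  (forall i, i <> j -> x i = 0) -> 0 <= x j <= u0 * nu -> lux_admissible Th x nu.
Proof.
  intros hTh hnu hu0 hTu0 hsupp hxj.
  apply lux_admissible_dominated with (fun i => if Nat.eqb i j then 1 else 0); auto.
  - intros i. destruct (Nat.eqb_spec i j) as [->|hij].
    + assert (hxnu : 0 <= x j / nu) by (apply Rdiv_le_0_compat; lra).
      split; [apply (orlicz_ge0 Th hTh), hxnu|].
      eapply Rle_trans; [|exact hTu0]. apply (orlicz_mono Th hTh); auto.
      apply Rmult_le_reg_r with nu; auto.
      replace (x j / nu * nu) with (x j) by (field; lra). lra.
    + rewrite hsupp, Rdiv_0_l, (orlicz_0 Th hTh) by exact hij. lra.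
  - apply ex_series_single.
  - rewrite Series_single. lra.
Qed.

Lemma DeltaTQ_admissible (Ph Ps : R -> R) (phi : nat -> R) (a : coeffs) (n j : nat)
    (u0 : R) (c : cseq) (l mu : R) :
  orlicz_function Ph -> orlicz_function Ps ->
  (forall u v, 0 <= u -> 0 <= v -> u * v <= Ph (2 * u) + Ps (2 * v)) ->
  weight_W phi -> (j <= n)%nat -> 0 < u0 -> Ps u0 <= 1 ->
  lux_admissible Ps (fun k => Cmod (c k)) l ->
  lux_admissible Ph (wcoef_minus phi (csub a (trunc (n - j) a))) mu ->
  lux_admissible Ps (fun i => Cmod (compo (DeltaJ j) (compo (Toeplitz a) (Qn n)) c i))
    (16 / u0 / phi (n - j + 1)%nat * l * mu).
Proof.
  intros hPh hPs hyoung hphi hj hu0 hPu0 hc hz.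
  pose proof (weight_pos phi (n - j + 1) hphi) as hpm.
  pose proof (DeltaTQ_entry_le Ph Ps phi a n j c l mu hPh hPs hyoung hphi hj hc hz) as hs.
  destruct hc as [hl _]. destruct hz as [hmu _].
  apply lux_admissible_single with j u0; auto; try lra.
  - assert (0 < 16 / u0 / phi (n - j + 1)%nat) by (repeat apply Rdiv_lt_0_compat; lra).
    apply Rmult_lt_0_compat; [apply Rmult_lt_0_compat|]; auto.
  - intros i hij. rewrite DeltaTQ_apply.
    destruct (Nat.eqb_spec i j); [contradiction|apply Cmod_0].
  - rewrite DeltaTQ_apply, Nat.eqb_refl. split; [apply Cmod_ge_0|].
    replace (u0 * (16 / u0 / phi (n - j + 1)%nat * l * mu))
      with (16 / phi (n - j + 1)%nat * l * mu) by (field; lra). exact hs.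
Qed.

Lemma DeltaTQ_op_norm_le (Ph Ps : R -> R) (phi : nat -> R) (a : coeffs) (n j : nat)
    (u0 : R) :
  orlicz_function Ph -> orlicz_function Ps ->
  (forall u v, 0 <= u -> 0 <= v -> u * v <= Ph (2 * u) + Ps (2 * v)) ->
  weight_W phi -> (j <= n)%nat -> 0 < u0 -> Ps u0 <= 1 ->
  ex_series (fun k => Ph (wcoef_minus phi a k)) ->
  Rbar_le (op_norm Ps (compo (DeltaJ j) (compo (Toeplitz a) (Qn n))))
    (16 / u0 / phi (n - j + 1)%nat *
       lux_norm Ph (wcoef_minus phi (csub a (trunc (n - j) a)))).
Proof.
  intros hPh hPs hyoung hphi hj hu0 hPu0 ha.
  apply op_norm_le_admissible; auto.
  - apply Rlt_le, Rdiv_lt_0_compat; [apply Rdiv_lt_0_compat; lra|apply weight_pos, hphi].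
  - apply lux_admissible_exists_le with (wcoef_minus phi a); auto.
    intros k; apply wcoef_minus_trunc_le, hphi.
  - intros c l mu hc hmu. apply DeltaTQ_admissible with Ph; auto.
Qed.

Lemma div_scale_le (K C x y w : R) :
  0 <= K <= C -> 0 <= x <= y -> 0 < w -> K / w * x <= C * y / w.
Proof.
  intros hK hx hw. unfold Rdiv.
  rewrite Rmult_assoc, (Rmult_comm (/ w)), <- Rmult_assoc.
  apply Rmult_le_compat_r; [apply Rlt_le, Rinv_0_lt_compat, hw|].
  apply Rmult_le_compat; lra.
Qed.

Theorem lemma3p6 :
  forall (p : R -> R), N_generator p ->
  Delta2_0 (Phi_of p) -> Delta2_0 (Psi_of p) ->
  forall (phi psi : nat -> R), weight_W phi -> weight_W psi ->
  exists C : R, 0 < C /\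
    forall (a : coeffs), in_Wiener a -> in_Fl (Phi_of p) (Psi_of p) phi psi a ->
    forall (n j : nat), (1 <= n)%nat -> (j <= n)%nat ->
      Rbar_le (op_norm (Psi_of p) (compo (Qn n) (compo (Toeplitz a) (DeltaJ j))))
        (Finite (C * Fl_norm (Phi_of p) (Psi_of p) phi psi
                       (csub a (trunc (n - j)%nat a)) / psi (n - j + 1)%nat)) /\
      Rbar_le (op_norm (Psi_of p) (compo (DeltaJ j) (compo (Toeplitz a) (Qn n))))
        (Finite (C * Fl_norm (Phi_of p) (Psi_of p) phi psi
                       (csub a (trunc (n - j)%nat a)) / phi (n - j + 1)%nat)).
Proof.
  intros p hp _ _ phi psi hphi hpsi.
  pose proof (orlicz_function_RInt p (N_generator_nonneg_nondecreasing p hp)) as hPh.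
  pose proof (q_of_nonneg_nondecreasing p hp) as hq.
  pose proof (orlicz_function_RInt (q_of p) hq) as hPs.
  destruct (RInt_le1_bounded (q_of p) hq (q_of_pos p 1 hp Rlt_0_1)) as [t0 [ht0 hball]].
  destruct (orlicz_function_le1_pos (Psi_of p) hPs) as [u0 [hu0 hPu0]].
  pose proof (Rdiv_lt_0_compat 16 u0 ltac:(lra) hu0).
  exists (t0 + 16 / u0). split; [lra|].
  intros a _ [hneg hpos] n j _ hj.
  set (b := csub a (trunc (n - j) a)).
  pose proof (lux_norm_ge0 (Phi_of p) (wcoef_minus phi b)).
  pose proof (lux_norm_ge0 (Psi_of p) (wcoef_plus psi b)).
  change (Fl_norm (Phi_of p) (Psi_of p) phi psi b)
    with (lux_norm (Phi_of p) (wcoef_minus phi b) + lux_norm (Psi_of p) (wcoef_plus psi b)).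
  split; eapply Rbar_le_trans.
  - apply (QTDelta_op_norm_le _ psi a n j t0); auto.
  - apply div_scale_le; fold b; [lra|lra|apply weight_pos, hpsi].
  - apply (DeltaTQ_op_norm_le (Phi_of p) _ phi a n j u0); auto. apply young_ineq, hp.
  - apply div_scale_le; fold b; [lra|lra|apply weight_pos, hphi].
Qed.
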